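(* Under the degree-corrected stochastic block model $DCSBM(n,P,\Theta,Z)$ with regularizer $\tau\ge0$, let $\tilde\lambda_1,\dots,\tilde\lambda_K$ be the $K$ nonzero eigenvalues of $\tilde F$ (in descending order of magnitude) and $\tilde a_1,\dots,\tilde a_K$ associated unit-norm right eigenvectors. Then: 1) $\tilde\Gamma\tilde F=N^{\mathscr L_\tau}\tilde\Gamma$; 2) the $K$ nonzero eigenvalues of $N^{\mathscr L_\tau}$ are $\tilde\lambda_1,\dots,\tilde\lambda_K$, with associated unit-norm right eigenvectors $$\tilde\eta_k=\sum_{i=1}^K\big[\tilde a_k(i)/\|\tilde\theta^{(i)}\|\big]\,\tilde\theta^{(i)},\qquad k=1,\dots,K.$$
   Context: $n$ nodes, each in exactly one of $K$ nonempty communities, $g_i$ the community of node $i$; $Z\in\{0,1\}^{n\times K}$ with $Z_{ik}=1$ iff $g_i=k$. $P$ is a $K\times K$ symmetric, nonnegative, nonsingular, irreducible matrix; $\theta\in\mathbb{R}^n$ has positive entries, $\Theta=\mathrm{diag}(\theta)$, $\Omega=\Theta ZPZ'\Theta$. Let $\mathscr D$ be the diagonal matrix with $\mathscr D_{ii}=\sum_{j=1}^n\Omega_{ij}$, $\mathscr D_\tau=\mathscr D+\tau I$, and $\mathscr L_\tau=\mathscr D_\tau^{-1/2}\Omega\mathscr D_\tau^{-1/2}$. For a matrix $Y$ with columns $Y_1,\dots,Y_t$, its column-normalized matrix $N^Y$ has $i$-th column $Y_i/\|Y_i\|$ (Euclidean norm); $N^{\mathscr L_\tau}$ is this for $\mathscr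 L_\tau$. Let $\theta_i^\tau=\theta_i\mathscr D_{ii}/(\mathscr D_{ii}+\tau)$, $\tilde\theta\in\mathbb{R}^n$ with $\tilde\theta_i=\sqrt{\theta_i^\tau}$, and for $1\le k\le K$ let $\tilde\theta^{(k)}(i)=\tilde\theta_i$ if $g_i=k$ and $0$ otherwise. Let $\tilde\Gamma$ be the $n\times K$ matrix with $k$-th column $\tilde\theta^{(k)}/\|\tilde\theta^{(k)}\|$, and $\tilde F=\tilde\Gamma'N^{\mathscr L_\tau}\tilde\Gamma$ ($K\times K$). *)

From mathcomp Require Import all_boot all_order all_algebra.
Set Implicit Arguments. Unset Strict Implicit. Unset Printing Implicit Defensive.
Import Order.TTheory GRing.Theory Num.Theory.
Local Open Scope ring_scope.

Section DCSBM.
Variable R : rcfType.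

Definition vnorm m (v : 'cV[R]_m) : R := Num.sqrt (\sum_i (v i 0) ^+ 2).

Definition colnorm m t (Y : 'M[R]_(m, t)) : 'M[R]_(m, t) :=
  \matrix_(i, j) (Y i j / vnorm (col j Y)).

Definition Zmat n K (g : 'I_n -> 'I_K) : 'M[R]_(n, K) :=
  \matrix_(i, k) (if g i == k then 1 else 0).

Definition Thetamat n (theta : 'I_n -> R) : 'M[R]_n := diag_mx (\row_i theta i).

Definition Omega n K (theta : 'I_n -> R) (g : 'I_n -> 'I_K) (P : 'M[R]_K)
  : 'M[R]_n :=
  Thetamat theta *m Zmat g *m P *m (Zmat g)^T *m Thetamat theta.

Definition degD n (Om : 'M[R]_n) (i : 'I_n) : R := \sum_j Om i j.

Definition Dtau_isqrt n (tau : R) (Om : 'M[R]_n) : 'M[R]_n :=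
  diag_mx (\row_i (Num.sqrt (degD Om i + tau))^-1).

Definition Ltau n (tau : R) (Om : 'M[R]_n) : 'M[R]_n :=
  Dtau_isqrt tau Om *m Om *m Dtau_isqrt tau Om.

Definition theta_tau n (tau : R) (theta : 'I_n -> R) (Om : 'M[R]_n) (i : 'I_n) : R :=
  theta i * degD Om i / (degD Om i + tau).

Definition theta_tilde n (tau : R) (theta : 'I_n -> R) (Om : 'M[R]_n) : 'cV[R]_n :=
  \col_i Num.sqrt (theta_tau tau theta Om i).

Definition theta_tilde_k n K (tau : R) (theta : 'I_n -> R) (Om : 'M[R]_n)
  (g : 'I_n -> 'I_K) (k : 'I_K) : 'cV[R]_n :=
  \col_i (if g i == k then theta_tilde tau theta Om i 0 else 0).

Definition Gamma_tilde n K (tau : R) (theta : 'I_n -> R) (Om : 'M[R]_n)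
  (g : 'I_n -> 'I_K) : 'M[R]_(n, K) :=
  \matrix_(i, k) (theta_tilde_k tau theta Om g k i 0
                   / vnorm (theta_tilde_k tau theta Om g k)).

Definition F_tilde n K (tau : R) (theta : 'I_n -> R) (Om : 'M[R]_n)
  (g : 'I_n -> 'I_K) : 'M[R]_K :=
  (Gamma_tilde tau theta Om g)^T *m colnorm (Ltau tau Om) *m Gamma_tilde tau theta Om g.

Definition irreducible_mx K (P : 'M[R]_K) : Prop :=
  forall i j : 'I_K, exists m : nat, 0 < (P ^+ m.+1) i j.

End DCSBM.

From mathcomp Require Import all_boot all_order all_algebra.
From mathcomp Require Import ring.
Import Order.TTheory GRing.Theory Num.Theory.
Local Open Scope ring_scope.

(* The entries of N = N^{L_tau} factor through the communities:
   N_ij = tilde theta_i * M_(g_i, g_j) for a K x K matrix M.  Hence N = G W,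
   where G = tilde Gamma has orthonormal columns, so F = G' N G = W G.  Then
   G F = G W G = N G; Sylvester's identity char(G W) = X^(n-K) char(W G) gives
   the spectrum of N; and eta_k = G a_k satisfies N eta_k = G F a_k and
   ||eta_k|| = ||a_k|| = 1. *)

Lemma surj_leq_card (aT rT : finType) (f : aT -> rT) :
  (forall y, exists x, f x = y) -> (#|rT| <= #|aT|)%N.
Proof.
move=> fsurj; rewrite -cardsT; apply: leq_trans (leq_imset_card f _).
apply: subset_leq_card; apply/subsetP => y _.
by have [x <-] := fsurj y; apply: imset_f.
Qed.

Lemma char_poly_mulmxC (R : idomainType) n K (U : 'M[R]_(n, K)) (W : 'M[R]_(K, n)) :
  (K <= n)%N -> char_poly (U *m W) = 'X^(n - K) * char_poly (W *m U).
Proof.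
move=> leKn; rewrite /char_poly /char_poly_mx !map_mxM.
set x : {poly R} := 'X; set U' := map_mx polyC U; set W' := map_mx polyC W.
pose A := block_mx (x%:M : 'M_n) U' W' (1%:M : 'M_K).
have detA1 : \det A = \det (x%:M - U' *m W').
  have := congr1 determinant (mulmx_block 1%:M (- U') 0 1%:M x%:M U' W' 1%:M).
  rewrite det_mulmx det_ublock !det1 mul1r !mul1mx !mul0mx !add0r mulmx1.
  by rewrite mulNmx addrN det_lblock det1 mulr1 mul1r.
have detA2 : x ^+ K * \det A = x ^+ n * \det (x%:M - W' *m U').
  have := congr1 determinant (mulmx_block 1%:M 0 (- W') x%:M x%:M U' W' 1%:M).
  rewrite det_mulmx det_lblock det1 mul1r det_scalar !mul1mx !mul0mx !addr0.
  rewrite mulmx1 mulNmx mul_mx_scalar mul_scalar_mx addNr -mulNmx addrC.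
  by rewrite det_ublock det_scalar.
apply: (@mulfI _ (x ^+ K)); first by rewrite expf_neq0 // polyX_eq0.
by rewrite -detA1 detA2 mulrA -exprD subnKC.
Qed.

Section EuclideanNorm.
Variable R : rcfType.

Lemma vnormE m (v : 'cV[R]_m) : vnorm v = Num.sqrt ((v^T *m v) 0 0).
Proof. by rewrite /vnorm mxE; congr Num.sqrt; apply: eq_bigr => i _; rewrite mxE. Qed.

Lemma vnorm_sqr m (v : 'cV[R]_m) : vnorm v ^+ 2 = \sum_i v i 0 ^+ 2.
Proof. by rewrite sqr_sqrtr // sumr_ge0 // => i _; rewrite sqr_ge0. Qed.

Lemma vnorm_gt0 m (v : 'cV[R]_m) i : v i 0 != 0 -> 0 < vnorm v.
Proof.
move=> vi0; rewrite sqrtr_gt0 (bigD1 i) //= ltr_pwDl ?exprn_even_gt0 //.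
by rewrite sumr_ge0 // => j _; rewrite sqr_ge0.
Qed.

Lemma vnormZ m a (v : 'cV[R]_m) : vnorm (a *: v) = `|a| * vnorm v.
Proof.
rewrite /vnorm -sqrtr_sqr -sqrtrM ?sqr_ge0 // mulr_sumr.
by congr Num.sqrt; apply: eq_bigr => i _; rewrite mxE exprMn.
Qed.

Lemma vnorm_isometry m p (G : 'M[R]_(m, p)) (v : 'cV[R]_p) :
  G^T *m G = 1%:M -> vnorm (G *m v) = vnorm v.
Proof. by move=> GTG; rewrite !vnormE trmx_mul -mulmxA (mulmxA G^T) GTG mul1mx. Qed.

End EuclideanNorm.

Section CommunityFrame.
Variables (R : rcfType) (n K : nat) (g : 'I_n -> 'I_K).
Variables (tau : R) (theta : 'I_n -> R) (Om : 'M[R]_n).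
Local Notation tt i := (theta_tilde tau theta Om i 0).
Local Notation ttk := (theta_tilde_k tau theta Om g).
Local Notation G := (Gamma_tilde tau theta Om g).
Hypothesis ttk_neq0 : forall k, vnorm (ttk k) != 0.

Lemma theta_tilde_kE k i : ttk k i 0 = if g i == k then tt i else 0.
Proof. by rewrite mxE. Qed.

Lemma Gamma_tildeE i k : G i k = ttk k i 0 / vnorm (ttk k).
Proof. by rewrite mxE. Qed.

Lemma Gamma_tilde_orthonormal : G^T *m G = 1%:M.
Proof.
apply/matrixP => k l; rewrite !mxE.
under eq_bigr => i _ do rewrite mxE !Gamma_tildeE.
have [<-|nkl] := eqVneq k l.
  under eq_bigr => i _ do rewrite mulrACA -invfM -!expr2.
  by rewrite -mulr_suml -vnorm_sqr divff // expf_neq0.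
rewrite big1 // => i _; rewrite !theta_tilde_kE.
have [gik|_] := eqVneq (g i) k; last by rewrite /= !mul0r.
by rewrite gik (negbTE nkl) mul0r mulr0.
Qed.

Lemma Gamma_tilde_factor (M : 'M[R]_K) :
  \matrix_(i, j) (tt i * M (g i) (g j))
  = G *m \matrix_(l, j) (vnorm (ttk l) * M l (g j)).
Proof.
apply/matrixP => i j; rewrite !mxE (bigD1 (g i)) //= big1 => [|l nl].
  by rewrite !mxE eqxx addr0 mulrA divfK.
by rewrite !mxE eq_sym (negbTE nl) !mul0r.
Qed.

End CommunityFrame.

Section DCSBM.
Variables (R : rcfType) (n K : nat) (g : 'I_n -> 'I_K) (P : 'M[R]_K).
Variables (theta : 'I_n -> R) (tau : R).
Hypothesis g_surj : forall k, exists i, g i = k.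
Hypothesis P_sym : P^T = P.
Hypothesis P_ge0 : forall k l, 0 <= P k l.
Hypothesis P_unit : P \in unitmx.
Hypothesis theta_gt0 : forall i, 0 < theta i.
Hypothesis tau_ge0 : 0 <= tau.
Local Notation Om := (Omega theta g P).
Local Notation tt i := (theta_tilde tau theta Om i 0).

Definition community_degree k := \sum_j theta j * P k (g j).

Definition ltau_weight i := theta i / Num.sqrt (degD Om i + tau).

Definition ltau_colnorm k := vnorm (\col_i (ltau_weight i * P (g i) k)).

Definition community_mx : 'M[R]_K :=
  \matrix_(l, k) (P l k / (Num.sqrt (community_degree l) * ltau_colnorm k)).

Lemma Zmat_mulmx p (M : 'M[R]_(K, p)) i j : (Zmat R g *m M) i j = M (g i) j.
Proof.
rewrite mxE (bigD1 (g i)) //= big1 => [|k nk]; rewrite mxE.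
  by rewrite eqxx mul1r addr0.
by rewrite eq_sym (negbTE nk) mul0r.
Qed.

Lemma mulmx_Zmat_tr p (M : 'M[R]_(p, K)) i j : (M *m (Zmat R g)^T) i j = M i (g j).
Proof.
have -> : (M *m (Zmat R g)^T) i j = (Zmat R g *m M^T) j i.
  by rewrite -[Zmat R g in RHS]trmxK -trmx_mul [RHS]mxE.
by rewrite Zmat_mulmx mxE.
Qed.

Lemma Omega_entry i j : Om i j = theta i * theta j * P (g i) (g j).
Proof.
rewrite /Omega /Thetamat mul_mx_diag mxE -!mulmxA mul_diag_mx mxE.
by rewrite Zmat_mulmx mulmx_Zmat_tr !mxE mulrAC.
Qed.

Lemma degD_Omega i : degD Om i = theta i * community_degree (g i).
Proof.
by rewrite /degD mulr_sumr; apply: eq_bigr => j _; rewrite Omega_entry mulrA.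
Qed.

Lemma P_row_gt0 k : exists l, 0 < P k l.
Proof.
have /existsP[l Pkl] : [exists l, P k l != 0].
  apply: contraT => /existsPn Pk0.
  have /rowP/(_ k) := row_mul k P (invmx P).
  rewrite mulmxV // !mxE eqxx big1 => [/eqP|l _]; first by rewrite oner_eq0.
  by rewrite mxE (eqP (negPn (Pk0 l))) mul0r.
by exists l; rewrite lt0r Pkl P_ge0.
Qed.

Lemma community_degree_gt0 k : 0 < community_degree k.
Proof.
have [l Pkl] := P_row_gt0 k; have [i gil] := g_surj l.
rewrite /community_degree (bigD1 i) //= ltr_pwDl //; first by rewrite gil mulr_gt0.
by rewrite sumr_ge0 // => j _; rewrite mulr_ge0 ?P_ge0 ?ltW.
Qed.

Lemma degD_tau_gt0 i : 0 < degD Om i + tau.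
Proof. by rewrite ltr_pwDl // degD_Omega mulr_gt0 ?community_degree_gt0. Qed.

Lemma ltau_weight_gt0 i : 0 < ltau_weight i.
Proof. by rewrite divr_gt0 ?sqrtr_gt0 ?degD_tau_gt0. Qed.

Local Notation w := ltau_weight.
Local Notation c := ltau_colnorm.

Lemma Ltau_Omega_entry i j : Ltau tau Om i j = w i * w j * P (g i) (g j).
Proof.
rewrite /Ltau /Dtau_isqrt mul_mx_diag mxE mul_diag_mx mxE Omega_entry !mxE.
by rewrite /ltau_weight; ring.
Qed.

Lemma vnorm_col_Ltau j : vnorm (col j (Ltau tau Om)) = w j * c (g j).
Proof.
have -> : col j (Ltau tau Om) = w j *: \col_i (w i * P (g i) (g j)).
  by apply/colP => i; rewrite /col [LHS]mxE Ltau_Omega_entry !mxE -mulrA mulrCA.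
by rewrite vnormZ gtr0_norm ?ltau_weight_gt0.
Qed.

Lemma ltau_colnorm_gt0 k : 0 < c k.
Proof.
have [l Pkl] := P_row_gt0 k; have [i gil] := g_surj l.
apply: (@vnorm_gt0 _ _ _ i); rewrite mxE mulf_neq0 ?lt0r_neq0 ?ltau_weight_gt0 //.
by rewrite -P_sym mxE gil.
Qed.

Lemma theta_tildeE i : tt i = w i * Num.sqrt (community_degree (g i)).
Proof.
rewrite /theta_tilde /theta_tau mxE.
have -> : theta i * degD Om i / (degD Om i + tau)
          = w i ^+ 2 * community_degree (g i).
  rewrite /ltau_weight expr_div_n sqr_sqrtr ?ltW ?degD_tau_gt0 // {1}degD_Omega.
  by ring.
by rewrite sqrtrM ?sqr_ge0 // sqrtr_sqr gtr0_norm ?ltau_weight_gt0.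
Qed.

Lemma colnorm_LtauE :
  colnorm (Ltau tau Om) = \matrix_(i, j) (tt i * community_mx (g i) (g j)).
Proof.
apply/matrixP => i j; rewrite /colnorm [LHS]mxE [RHS]mxE Ltau_Omega_entry.
rewrite vnorm_col_Ltau theta_tildeE mxE.
have := ltau_weight_gt0 j; have := ltau_colnorm_gt0 (g j).
have := sqrtr_gt0 (community_degree (g i)); rewrite community_degree_gt0.
by move=> /lt0r_neq0 s0 /lt0r_neq0 c0 /lt0r_neq0 w0; field; rewrite s0 c0 w0.
Qed.

Lemma vnorm_theta_tilde_k_neq0 k : vnorm (theta_tilde_k tau theta Om g k) != 0.
Proof.
have [i gik] := g_surj k; apply/lt0r_neq0/(@vnorm_gt0 _ _ _ i).
rewrite mxE gik eqxx theta_tildeE mulf_neq0 ?lt0r_neq0 ?ltau_weight_gt0 //.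
by rewrite sqrtr_gt0 community_degree_gt0.
Qed.

End DCSBM.

Theorem lemma5 (R : rcfType) (n K : nat) (g : 'I_n -> 'I_K) (P : 'M[R]_K)
  (theta : 'I_n -> R) (tau : R)
  (lambda : 'I_K -> R) (a : 'I_K -> 'cV[R]_K) :
  (forall k : 'I_K, exists i : 'I_n, g i = k) ->
  P^T = P ->
  (forall k l, 0 <= P k l) ->
  P \in unitmx ->
  irreducible_mx P ->
  (forall i, 0 < theta i) ->
  0 <= tau ->
  let Om := Omega theta g P in
  let F := F_tilde tau theta Om g in
  let N := colnorm (Ltau tau Om) in
  let G := Gamma_tilde tau theta Om g in
  (* lambda_1..lambda_K : the K nonzero eigenvalues of F, with multiplicity,
     in descending order of magnitude *)
  char_poly F = \prod_(k < K) ('X - (lambda k)%:P) ->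
  (forall k, lambda k != 0) ->
  (forall k l : 'I_K, (k <= l)%N -> `|lambda l| <= `|lambda k|) ->
  (* a_k : associated unit-norm right eigenvectors *)
  (forall k, F *m a k = lambda k *: a k) ->
  (forall k, vnorm (a k) = 1) ->
  (* 1) *)
  G *m F = N *m G /\
  (* 2) nonzero eigenvalues of N (with multiplicity) are the lambda_k *)
  char_poly N = 'X^(n - K) * \prod_(k < K) ('X - (lambda k)%:P) /\
  (forall k : 'I_K,
     let eta := \sum_(i < K) (a k i 0 / vnorm (theta_tilde_k tau theta Om g i))
                               *: theta_tilde_k tau theta Om g i in
     N *m eta = lambda k *: eta /\ vnorm eta = 1).
Proof.
move=> g_surj P_sym P_ge0 P_unit _ theta_gt0 tau_ge0 Om F N G cpF _ _ Fa a_unit.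
have ttk_neq0 k : vnorm (theta_tilde_k tau theta Om g k) != 0.
  exact: vnorm_theta_tilde_k_neq0.
have GTG : G^T *m G = 1%:M by apply: Gamma_tilde_orthonormal.
have [W NGW] : exists W, N = G *m W.
  by rewrite /N colnorm_LtauE // Gamma_tilde_factor //; eexists.
have FE : F = W *m G by rewrite /F /F_tilde -/N -/G NGW mulmxA GTG mul1mx.
split; first by rewrite FE mulmxA -NGW.
have leKn : (K <= n)%N by rewrite -[K]card_ord -[n]card_ord; exact: surj_leq_card.
split; first by rewrite NGW char_poly_mulmxC // -FE cpF.
move=> k eta; have -> : eta = G *m a k.
  apply/colP => i; rewrite summxE mxE; apply: eq_bigr => l _.
  by rewrite mxE Gamma_tildeE mulrC mulrA mulrAC.
split; first by rewrite NGW -mulmxA (mulmxA W) -FE Fa scalemxAr.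
by rewrite vnorm_isometry.
Qed.
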